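(* Let $r\ge 3$ and let $G=K_{n_1,\dots,n_r}$ be a complete $r$-partite graph (all $n_i\ge 1$) of order $n=n_1+\dots+n_r$. Then $\chi_{ei}(G)=1$ if $r=3$ and $G=K_{1,1,1}$; $\chi_{ei}(G)=n-1$ if $r=3$, $n\ge 4$ and $G\in\{K_{n-2,1,1},K_{1,n-2,1},K_{1,1,n-2}\}$; and $\chi_{ei}(G)=n$ otherwise.
   Context: All graphs are finite and simple. A complete $r$-partite graph $K_{n_1,\dots,n_r}$ has its vertex set partitioned into $r$ independent sets of sizes $n_1,\dots,n_r$, with two vertices adjacent if and only if they lie in different parts. A path $P_4$ in $G$ is a sequence $uxyv$ of four distinct vertices with $ux,xy,yv\in E(G)$; $u,v$ are its end vertices. An $e$-injective $k$-coloring of $G$ is a function $f:V(G)\to\{1,\dots,k\}$ with $f(u)\ne f(v)$ whenever $u,v$ are the end vertices of some path $P_4$ in $G$; $\chi_{ei}(G)$ is the least such $k$. *)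

From mathcomp Require Import all_boot.
Set Implicit Arguments. Unset Strict Implicit. Unset Printing Implicit Defensive.

(* A simple graph: vertex set a finType T, edge relation e (assumed symmetric,
   irreflexive where relevant). *)

Definition P4_ends (T : finType) (e : rel T) (u v : T) : bool :=
  [exists x : T, exists y : T,
     [&& uniq [:: u; x; y; v], e u x, e x y & e y v]].

(* f : T -> 'I_k is an e-injective k-coloring (colors {0..k-1} instead of {1..k}). *)
Definition ei_coloring (T : finType) (e : rel T) (k : nat) (f : T -> 'I_k) : Prop :=
  forall u v : T, P4_ends e u v -> f u != f v.

Definition ei_colorable (T : finType) (e : rel T) (k : nat) : Prop :=
  exists f : T -> 'I_k, ei_coloring e f.

Definition is_chi_ei (T : finType) (e : rel T) (m : nat) : Prop :=
  ei_colorable e m /\ forall k, ei_colorable e k -> m <= k.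

(* Complete r-partite graph K_{n_0,...,n_{r-1}}: vertices are pairs (i, a) with
   a < n i (vertex a in part i); adjacent iff in different parts. *)
Definition cmp_vertex (r : nat) (n : 'I_r -> nat) : finType :=
  {i : 'I_r & 'I_(n i)}.

Definition cmp_adj (r : nat) (n : 'I_r -> nat) : rel (cmp_vertex n) :=
  fun u v => tag u != tag v.

From mathcomp Require Import all_boot zify.

Set Implicit Arguments.
Unset Strict Implicit.
Unset Printing Implicit Defensive.

(** In a complete multipartite graph with at least three parts, any two
  distinct vertices are the ends of a path [P4], with one exception: when
  there are exactly three parts, a [P4] joining vertices of two singleton
  parts would have to visit four different parts.  Hence the vertices of
  the singleton parts (when [r = 3]) may all share one colour while every
  other pair of vertices needs distinct colours, so that [chi_ei] equals
  [n - (s - 1)] for [s >= 1] singleton parts, and [n] otherwise; the three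
  cases of the statement are [s = 3], [s = 2] and [s <= 1]. *)

Lemma exists_notin (T : finType) (s : seq T) : size s < #|T| -> exists x, x \notin s.
Proof.
move=> lt_s_T; apply/existsP; rewrite -negb_forall; apply: contraL lt_s_T.
move=> /forallP sT; rewrite -leqNgt; apply: leq_trans (card_size s).
by apply/subset_leq_card/subsetP => x _; apply: sT.
Qed.

Section EInjectiveColoring.

Variables (T : finType) (e : rel T).

Lemma P4_ends_irrefl u : ~~ P4_ends e u u.
Proof.
apply/existsP => -[x /existsP [y /and4P [U _ _ _]]].
by move: U; rewrite /= !in_cons eqxx !orbT.
Qed.

Lemma P4_ends_sym : symmetric e -> symmetric (P4_ends e).
Proof.
move=> e_sym u v; apply/existsP/existsP => -[x /existsP [y /and4P [U ux xy yv]]];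
  exists y; apply/existsP; exists x; rewrite e_sym yv e_sym xy e_sym ux !andbT;
  by rewrite -rev_uniq in U.
Qed.

Lemma card_le_ei_colorable (S : {set T}) k :
  {in S &, forall u v, u != v -> P4_ends e u v} -> ei_colorable e k -> #|S| <= k.
Proof.
move=> S_P4 [f f_col].
have f_inj : {in S &, injective f}.
  move=> u v uS vS /eqP; apply: contraTeq => uv.
  exact: f_col (S_P4 u v uS vS uv).
by rewrite -(card_in_imset f_inj) (leq_trans (max_card _)) ?card_ord.
Qed.

Lemma ei_colorable_card (S : {set T}) (g : T -> T) :
  (forall x, g x \in S) -> (forall u v, P4_ends e u v -> g u != g v) ->
  ei_colorable e #|S|.
Proof.
move=> gS g_P4; exists (fun x => enum_rank_in (gS x) (g x)) => u v /g_P4.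
apply: contra => /eqP eq_rank.
by rewrite -(enum_rankK_in (gS u) (gS u)) eq_rank enum_rankK_in.
Qed.

Lemma is_chi_ei_retract (S : {set T}) (g : T -> T) :
  {in S &, forall u v, u != v -> P4_ends e u v} ->
  (forall x, g x \in S) -> (forall u v, P4_ends e u v -> g u != g v) ->
  is_chi_ei e #|S|.
Proof.
move=> S_P4 gS g_P4; split; first exact: ei_colorable_card gS g_P4.
by move=> k; apply: card_le_ei_colorable.
Qed.

Lemma is_chi_ei_complete :
  (forall u v, u != v -> P4_ends e u v) -> is_chi_ei e #|T|.
Proof.
move=> all_P4; rewrite -cardsT; apply: (@is_chi_ei_retract _ id) => //.
- by move=> u v _ _; apply: all_P4.
- by move=> u v; apply: contraL => /eqP ->; apply: P4_ends_irrefl.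
Qed.

(* [M] collapses to a single colour class; the truncated [.-1] makes the
   value [#|T|] when [M] is empty. *)
Lemma is_chi_ei_merge (M : {set T}) :
  (forall u v, P4_ends e u v = (u != v) && ~~ ((u \in M) && (v \in M))) ->
  is_chi_ei e (#|T| - #|M|.-1).
Proof.
move=> P4E; have [M0 | [m mM]] := set_0Vmem M.
  rewrite M0 cards0 subn0 in P4E *; apply: is_chi_ei_complete => u v uv.
  by rewrite P4E uv inE.
have -> : #|T| - #|M|.-1 = #|m |: ~: M|.
  have M_gt0 : 0 < #|M| by apply/card_gt0P; exists m.
  by rewrite cardsU1 !inE mM -(cardsC M) /=; lia.
apply: (@is_chi_ei_retract _ (fun x => if x \in M then m else x)).
- move=> u v; rewrite !inE P4E => /predU1P [-> | uM] /predU1P [-> | vM] uv;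
    rewrite uv ?(negbTE uM) ?(negbTE vM) ?andbF //.
  by rewrite eqxx in uv.
- by move=> x; rewrite !inE; case: ifP => [_ | ->]; rewrite ?eqxx ?orbT.
- move=> u v; rewrite P4E => /andP [uv /negP uvM].
  case: ifP => uM; case: ifP => vM //.
  + by case: uvM; rewrite uM vM.
  + by apply: contraFneq vM => <-.
  + by apply: contraFneq uM => ->.
Qed.

End EInjectiveColoring.

Section CompleteMultipartite.

Variables (r : nat) (n : 'I_r -> nat).
Hypothesis n_gt0 : forall i, 0 < n i.

Local Notation V := (cmp_vertex n).
Local Notation adj := (@cmp_adj r n).

Lemma card_cmp_vertex : #|V| = \sum_(i < r) n i.
Proof.
rewrite /cmp_vertex card_tagged sumnE big_map big_enum /=.
by apply: eq_bigr => i _; rewrite card_ord.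
Qed.

Lemma cmp_adj_sym : symmetric adj.
Proof. by move=> u v; rewrite /cmp_adj eq_sym. Qed.

Definition part_vertex (i : 'I_r) : V := Tagged (fun i => 'I_(n i)) (Ordinal (n_gt0 i)).

Lemma cmp_vertex_singleton (u v : V) : n (tag u) = 1 -> tag u = tag v -> u = v.
Proof.
case: u v => i a [j b] /= ni eq_ij; subst j; congr existT; apply: val_inj.
by case: a b => a ha [b hb] /=; rewrite ni in ha hb; lia.
Qed.

Lemma exists_other_vertex (u : V) : 1 < n (tag u) -> exists2 w : V, tag w = tag u & w != u.
Proof.
case: u => i a /= ni.
have [b] : exists b, b \notin [:: a] by apply: exists_notin; rewrite card_ord.
by rewrite mem_seq1 => ba; exists (Tagged (fun i => 'I_(n i)) b); rewrite // eq_Tagged.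
Qed.

Lemma neq_of_tag (u v : V) : tag u != tag v -> u != v.
Proof. by apply: contraNneq => ->. Qed.

Lemma cmp_P4_endsI (u x y v : V) :
  tag u != tag x -> tag x != tag y -> tag y != tag v ->
  u != v -> u != y -> x != v -> P4_ends adj u v.
Proof.
move=> ux xy yv uv uy xv; apply/existsP; exists x; apply/existsP; exists y.
by rewrite /cmp_adj ux xy yv /= !inE !negb_or uv uy xv !neq_of_tag.
Qed.

Lemma cmp_P4_ends_two_parts (u v : V) (k1 k2 : 'I_r) :
  u != v -> k1 \notin [:: tag u; tag v] -> k2 \notin [:: tag u; tag v; k1] ->
  P4_ends adj u v.
Proof.
rewrite !inE !negb_or => uv /andP [k1u k1v] /and3P [k2u k2v k2k1].
apply: (@cmp_P4_endsI _ (part_vertex k1) (part_vertex k2)) => //=.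
- by rewrite eq_sym.
- by rewrite eq_sym.
- by apply: neq_of_tag; rewrite /= eq_sym.
- exact: neq_of_tag.
Qed.

Lemma cmp_P4_ends_same_part (u v : V) :
  2 < r -> tag u = tag v -> u != v -> P4_ends adj u v.
Proof.
move=> r_gt2 tuv uv.
have [k1 k1u] : exists k1, k1 \notin [:: tag u] by apply: exists_notin; rewrite card_ord /=; lia.
have [k2 k2u] : exists k2, k2 \notin [:: tag u; k1] by apply: exists_notin; rewrite card_ord.
apply: (cmp_P4_ends_two_parts (k1 := k1) (k2 := k2) uv); rewrite -tuv.
  by move: k1u; rewrite !inE orbb.
by move: k2u; rewrite !inE orbA orbb.
Qed.

Lemma cmp_P4_ends_gt3 (u v : V) : 3 < r -> u != v -> P4_ends adj u v.
Proof.
move=> r_gt3 uv; have [tuv | tuv] := eqVneq (tag u) (tag v).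
  by apply: cmp_P4_ends_same_part => //; lia.
have [k1 k1uv] : exists k1, k1 \notin [:: tag u; tag v].
  by apply: exists_notin; rewrite card_ord /=; lia.
have [k2 k2uvk1] : exists k2, k2 \notin [:: tag u; tag v; k1].
  by apply: exists_notin; rewrite card_ord.
exact: cmp_P4_ends_two_parts uv k1uv k2uvk1.
Qed.

Lemma cmp_P4_ends_big_part (u v : V) :
  2 < r -> tag u != tag v -> 1 < n (tag u) -> P4_ends adj u v.
Proof.
move=> r_gt2 tuv nu; have [w twu wu] := exists_other_vertex nu.
have [k] : exists k, k \notin [:: tag u; tag v] by apply: exists_notin; rewrite card_ord /=; lia.
rewrite !inE !negb_or => /andP [ku kv].
apply: (@cmp_P4_endsI _ (part_vertex k) w); rewrite /= ?twu //.
- by rewrite eq_sym.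
- exact: neq_of_tag.
- by rewrite eq_sym.
- exact: neq_of_tag.
Qed.

(* A [P4] between singleton parts visits four distinct parts. *)
Lemma cmp_singletons_P4_ends_gt3 (u v : V) :
  n (tag u) = 1 -> n (tag v) = 1 -> P4_ends adj u v -> 3 < r.
Proof.
move=> nu nv /existsP [x /existsP [y /and4P [U ux xy yv]]].
move: U; rewrite /= !inE !negb_or => /and4P [/and3P [_ uy uv] /andP [_ xv] _ _].
rewrite /cmp_adj in ux xy yv.
have tuv : tag u != tag v by apply: contra uv => /eqP /(cmp_vertex_singleton nu) ->.
have txv : tag x != tag v by apply: contra xv => /eqP /esym /(cmp_vertex_singleton nv) ->.
have tyu : tag y != tag u by apply: contra uy => /eqP /esym /(cmp_vertex_singleton nu) ->.
have : uniq [:: tag u; tag v; tag x; tag y].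
  by rewrite /= !inE !negb_or tuv ux (eq_sym (tag u)) tyu !(eq_sym (tag v)) txv yv xy.
by move/card_uniqP => /= <-; apply: leq_trans (max_card _) _; rewrite card_ord.
Qed.

Definition singleton_vertices : {set V} := [set u | n (tag u) == 1].

Lemma card_singleton_vertices : #|singleton_vertices| = #|[set i | n i == 1]|.
Proof.
have tag_inj : {in singleton_vertices &, injective tag}.
  by move=> u v; rewrite inE => /eqP nu _; apply: cmp_vertex_singleton.
rewrite -(card_in_imset tag_inj); apply: eq_card => i; rewrite inE.
apply/imsetP/idP => [[u] | ni]; first by rewrite inE => nu ->.
by exists (part_vertex i); rewrite ?inE.
Qed.

Lemma P4_ends_cmp3 : r = 3 -> forall u v : V,
  P4_ends adj u v =
  (u != v) && ~~ ((u \in singleton_vertices) && (v \in singleton_vertices)).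
Proof.
move=> r3 u v; rewrite !inE; apply/idP/andP => [P4 | [uv]].
  split; first by apply: contraTneq P4 => ->; apply: P4_ends_irrefl.
  by apply/andP => -[/eqP nu /eqP nv]; have := cmp_singletons_P4_ends_gt3 nu nv P4; lia.
have [tuv _ | tuv] := eqVneq (tag u) (tag v).
  by apply: cmp_P4_ends_same_part => //; lia.
rewrite negb_and => /orP [nu | nv].
  by apply: cmp_P4_ends_big_part => //; [lia | move: (n_gt0 (tag u)) nu; lia].
rewrite P4_ends_sym; last exact: cmp_adj_sym.
by apply: cmp_P4_ends_big_part; rewrite 1?eq_sym //; [lia | move: (n_gt0 (tag v)) nv; lia].
Qed.

End CompleteMultipartite.

Lemma tripartite_chi_ei_value (n : 'I_3 -> nat) : (forall i, 0 < n i) ->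
  let N := \sum_(i < 3) n i in
  (if [forall i, n i == 1] then 1
   else if (4 <= N) && [exists j, (n j == N - 2) && [forall i, (i != j) ==> (n i == 1)]]
   then N - 1 else N) = N - #|[set i | n i == 1]|.-1.
Proof.
move=> n_gt0 N.
have forall_big (P : pred 'I_3) : [forall i, P i] = \big[andb/true]_i P i.
  by rewrite big_andE.
have exists_big (P : pred 'I_3) : [exists i, P i] = \big[orb/false]_i P i.
  by rewrite big_orE.
rewrite -sum1_card big_mkcond /N forall_big exists_big.
rewrite !big_ord_recl !big_ord0 !forall_big !big_ord_recl !big_ord0 /= !inE.
move: (n_gt0 ord0) (n_gt0 (lift ord0 ord0)) (n_gt0 (lift ord0 (lift ord0 ord0))).
move: (n ord0) (n (lift ord0 ord0)) (n (lift ord0 (lift ord0 ord0))) => a b c.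
by case: (a =P 1) => [->|]; case: (b =P 1) => [->|]; case: (c =P 1) => [->|] //=;
  try lia; case: ifP; lia.
Qed.

Theorem proposition3p7 (r : nat) (n : 'I_r -> nat) :
  3 <= r -> (forall i, 0 < n i) ->
  let N := \sum_(i < r) n i in
  is_chi_ei (@cmp_adj r n)
    (if (r == 3) && [forall i, n i == 1] then 1
     else if [&& r == 3, 4 <= N &
                 [exists j, (n j == N - 2) && [forall i, (i != j) ==> (n i == 1)]]]
     then N - 1
     else N).
Proof.
move=> r_ge3 n_gt0 N.
have [r3 | r_ne3] := eqVneq r 3.
  have := is_chi_ei_merge (P4_ends_cmp3 n_gt0 r3).
  rewrite card_cmp_vertex (card_singleton_vertices n_gt0) -/N.
  subst r; have := tripartite_chi_ei_value n_gt0.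
  by rewrite /= -/N => ->.
have r_gt3 : 3 < r by rewrite ltn_neqAle eq_sym r_ne3.
rewrite /= /N -card_cmp_vertex.
by apply: is_chi_ei_complete => u v; apply: cmp_P4_ends_gt3.
Qed.
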